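(* Let $p(x)\in\mathbb{Q}[x]$ be a polynomial with positive leading coefficient and $p(0)=0$. Then the set $\mathbb{N}\cap\{p(n):n\in\mathbb{N}\}$ is large.
   Context: A set $D\subseteq\mathbb{N}$ is $r$-large if for every $r$-coloring of $\mathbb{N}$ and every $k\ge1$ there is a monochromatic arithmetic progression $a,a+d,\dots,a+(k-1)d$ in $\mathbb{N}$ with $d\in D$; it is large if it is $r$-large for every $r\in\mathbb{N}$. (One may use the known fact that this holds for polynomials with integer coefficients, positive leading coefficient and zero constant term.) *)

(* Convention: N = {1,2,3,...} (positive integers), encoded as
   elements of nat that are > 0. *)
From HB Require Import structures.
From mathcomp Require Import all_boot all_order all_algebra.
Set Implicit Arguments. Unset Strict Implicit. Unset Printing Implicit Defensive.
Import Order.TTheory GRing.Theory Num.Theory.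

Definition r_large (D : nat -> Prop) (r : nat) : Prop :=
  forall (c : nat -> 'I_r) (k : nat), (0 < k)%N ->
    exists a d : nat, [/\ (0 < a)%N, D d &
      forall i : nat, (i < k)%N -> c (a + i * d)%N = c a].

Definition large (D : nat -> Prop) : Prop :=
  forall r : nat, (0 < r)%N -> r_large D r.

Definition pos_values (p : {poly rat}) : nat -> Prop :=
  fun d => (0 < d)%N /\ exists n : nat, (0 < n)%N /\ (p.[n%:R] = d%:R)%R.

From Stdlib Require Import Wellfounded Wf_nat.
From mathcomp Require Import all_boot all_order all_algebra.
From mathcomp Require Import zify ring polyrcf.
Set Implicit Arguments. Unset Strict Implicit. Unset Printing Implicit Defensive.
Import Order.TTheory GRing.Theory Num.Theory.
Local Open Scope ring_scope.

(* The integer case is the polynomial van der Waerden theorem of Bergelson and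
   Leibman, proved by PET induction with Walters' colour-focusing argument.
   For a finite family P of integer polynomials vanishing at 0, [pvdw P] asks that
   every finite colouring of Z contain a monochromatic pattern x + q(n), q in P,
   with n > 0 and everything bounded in terms of the number of colours only.
   Fix p in P of least degree. If pvdw holds for the families of the
   polynomials y |-> (q - p)(y + s) - (q - p)(s), q in P \ {p}, s <= S, then
   iterating colour focusing r times produces r configurations, each
   monochromatic off p, with pairwise distinct colours and a common point f for p;
   the colour of f is one of them, making that configuration monochromatic.
   These families have a smaller weight vector (number of distinct leading
   coefficients in each degree, compared from the top degree down), which is the
   induction.
   A rational p with p(0) = 0 satisfies p(m n) = q(n) for some m and some integer
   q; the family {q, 2q, ..., kq} then yields monochromatic progressions
   x + q(n), ..., x + k q(n) of common difference p(m n). *)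

Definition lex_lt (D : nat) (v u : nat -> nat) : Prop :=
  exists d, [/\ (d <= D)%N, (v d < u d)%N & forall e, (d < e <= D)%N -> v e = u e].

Lemma lex_lt_wf D : well_founded (lex_lt D).
Proof.
elim: D => [|D wfD].
  apply: (@wf_incl _ _ (ltof _ (fun u => u 0%N))); last exact: well_founded_ltof.
  by move=> v u [d [+ vu _]]; rewrite leqn0 => /eqP d0; apply/ssrnat.ltP; rewrite -d0.
suff acc n u : u D.+1 = n -> Acc (lex_lt D.+1) u by move=> u; apply: acc erefl.
elim/ltn_ind: n u => n IHn u; elim: (wfD u) => {}u _ IHu un.
constructor => v [d [dD vu ev]].
have [dleD|Dd] := leqP d D; last first.
  by apply: (IHn (v D.+1)) => //; rewrite -un -[D.+1](@anti_leq d) ?dD.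
have vuD : v D.+1 = u D.+1 by apply: ev; rewrite ltnS dleD /=.
apply: IHu; last by rewrite vuD.
by exists d; split=> // e /andP[de eD]; apply: ev; rewrite de leqW.
Qed.

Lemma exists_argmin (T : eqType) (f : T -> nat) (s : seq T) :
  s != [::] -> exists2 x, x \in s & forall y, y \in s -> (f x <= f y)%N.
Proof.
case: s => // x s _.
have hex : exists n, has (fun y => f y == n) (x :: s) by exists (f x); rewrite /= eqxx.
case: (ex_minnP hex) => n /hasP[y ys /eqP fy] nmin.
by exists y => // z zs; rewrite fy; apply: nmin; apply/hasP; exists z.
Qed.

Section Polynomials.
Variable R : idomainType.
Implicit Types (g p q : {poly R}) (s y : R).

Definition shift_diff g s := g \Po ('X + s%:P) - (g.[s])%:P.

Lemma horner_shift_diff g s y : (shift_diff g s).[y] = g.[y + s] - g.[s].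
Proof. by rewrite /shift_diff !hornerE horner_comp !hornerE. Qed.

Lemma size_shift_diff_lt g s : (1 < size g)%N ->
  (size (- (g.[s])%:P) < size (g \Po ('X + s%:P)))%N.
Proof.
rewrite size_polyN size_comp_poly2 ?size_XaddC //.
by apply: leq_ltn_trans; apply: size_polyC_leq1.
Qed.

Lemma size_shift_diff g s : (1 < size g)%N -> size (shift_diff g s) = size g.
Proof.
move=> g1; rewrite size_polyDl ?size_shift_diff_lt //.
by rewrite size_comp_poly2 ?size_XaddC.
Qed.

Lemma lead_coef_shift_diff g s : (1 < size g)%N ->
  lead_coef (shift_diff g s) = lead_coef g.
Proof.
move=> g1; rewrite lead_coefDl ?size_shift_diff_lt //.
by rewrite lead_coef_comp ?size_XaddC // lead_coefXaddC expr1n mulr1.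
Qed.

Lemma size_gt1_root0 g : g != 0 -> root g 0 -> (1 < size g)%N.
Proof.
move=> gn0 g0; rewrite ltnNge; apply: contraNN gn0 => /size1_polyC ->.
by rewrite -horner_coef0 (rootP g0).
Qed.

Lemma coef_subr_eqsize q p n : size q = n.+1 -> size p = n.+1 ->
  (q - p)`_n = lead_coef q - lead_coef p.
Proof. by move=> sq sp; rewrite coefB !lead_coefE sq sp. Qed.

Lemma size_subr_eqsize q p n : size q = n.+1 -> size p = n.+1 ->
  (size (q - p) == n.+1) = (lead_coef q != lead_coef p).
Proof.
move=> sq sp; rewrite -subr_eq0 -(coef_subr_eqsize sq sp).
have sqp : (size (q - p)%R <= n.+1)%N.
  by rewrite (leq_trans (size_polyD _ _)) // size_polyN sq sp maxnn.
apply/eqP/idP => [sqpn|qpn].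
  by rewrite -[n]/(n.+1.-1) -sqpn lead_coef_eq0 -size_poly_gt0 sqpn.
apply/eqP; rewrite eqn_leq sqp ltnNge; apply: contraNN qpn => /leq_sizeP->//.
Qed.

Lemma lead_coef_subr_eqsize q p n : size q = n.+1 -> size p = n.+1 ->
  size (q - p) = n.+1 -> lead_coef (q - p) = lead_coef q - lead_coef p.
Proof. by move=> sq sp sqp; rewrite lead_coefE sqp coef_subr_eqsize. Qed.

End Polynomials.

Definition admissible (P : seq {poly int}) : Prop :=
  forall q, q \in P -> q != 0 /\ q.[0] = 0.

Definition diff_family (P : seq {poly int}) (p : {poly int}) (S : nat) :=
  [seq shift_diff (q - p) s%:Z | q <- [seq q <- P | q != p], s <- iota 0%N S.+1].

Definition lead_coefs (P : seq {poly int}) (e : nat) : seq int :=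
  undup [seq lead_coef q | q : {poly int} <- P & size q == e.+1].

Definition weight (P : seq {poly int}) (e : nat) : nat := size (lead_coefs P e).

Lemma mem_lead_coefsP (P : seq {poly int}) (e : nat) (x : int) :
  reflect (exists2 q, q \in P & size q = e.+1 /\ lead_coef q = x)
          (x \in lead_coefs P e).
Proof.
rewrite mem_undup; apply: (iffP mapP) => [[q]|[q qP [sq <-]]].
  by rewrite mem_filter => /andP[/eqP sq qP] ->; exists q.
by exists q; rewrite // mem_filter sq eqxx.
Qed.

Section DiffFamily.
Variables (P : seq {poly int}) (p : {poly int}).
Hypotheses (admP : admissible P) (pP : p \in P).

Lemma mem_diff_familyP S g :
  reflect (exists q s, [/\ q \in P, q != p, (s <= S)%N & g = shift_diff (q - p) s%:Z])
          (g \in diff_family P p S).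
Proof.
apply: (iffP allpairsP) => [[[q s] [+ + ->]]|[q [s [qP qp sS ->]]]].
  by rewrite mem_filter mem_iota => /andP[qp qP] /andP[_ sS]; exists q, s.
by exists (q, s); rewrite mem_filter mem_iota /= qp qP ltnS sS.
Qed.

Lemma root0_subr q : q \in P -> (q - p).[0] = 0.
Proof. by move=> qP; rewrite hornerD hornerN (admP qP).2 (admP pP).2 subr0. Qed.

Lemma size_subr_gt1 q : q \in P -> q != p -> (1 < size (q - p)%R)%N.
Proof. by move=> qP qp; rewrite size_gt1_root0 ?subr_eq0 //; apply/rootP/root0_subr. Qed.

Lemma admissible_diff_family S : admissible (diff_family P p S).
Proof.
move=> g /mem_diff_familyP[q [s [qP qp _ ->]]]; split.
  by rewrite -size_poly_gt0 size_shift_diff ?(ltnW (size_subr_gt1 qP qp)) ?size_subr_gt1.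
by rewrite horner_shift_diff add0r subrr.
Qed.

Lemma size_diff_family S D : (forall q, q \in P -> (size q <= D)%N) ->
  forall g, g \in diff_family P p S -> (size g <= D)%N.
Proof.
move=> degP g /mem_diff_familyP[q [s [qP qp _ ->]]].
rewrite size_shift_diff ?size_subr_gt1 // (leq_trans (size_polyD _ _)) //.
by rewrite size_polyN geq_max !degP.
Qed.

Lemma mem_lead_coefs_diffP S e x :
  reflect (exists2 q, q \in P & [/\ q != p, size (q - p) = e.+1 & lead_coef (q - p) = x])
          (x \in lead_coefs (diff_family P p S) e).
Proof.
apply: (iffP (mem_lead_coefsP _ _ _)) => [[g /mem_diff_familyP[q [s [qP qp _ ->]]]]|].
  by rewrite size_shift_diff ?lead_coef_shift_diff ?size_subr_gt1 // => -[]; exists q.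
case=> q qP [qp sq lq]; exists (shift_diff (q - p) 0).
  by apply/mem_diff_familyP; exists q, 0%N.
by rewrite size_shift_diff ?lead_coef_shift_diff ?size_subr_gt1.
Qed.

Hypothesis pmin : forall q, q \in P -> (size p <= size q)%N.

Lemma weight_diff_family_gt S e : (size p <= e)%N ->
  weight (diff_family P p S) e = weight P e.
Proof.
move=> pe; apply/perm_size/uniq_perm; rewrite ?undup_uniq // => x.
have subr_big (q : {poly int}) : (size p < size q)%N ->
    size (q - p) = size q /\ lead_coef (q - p) = lead_coef q.
  by move=> pq; rewrite size_polyDl ?lead_coefDl ?size_polyN.
apply/mem_lead_coefs_diffP/mem_lead_coefsP => [[q qP [qp sqp <-]]|[q qP [sq <-]]].
  have [pq|qp'] := ltnP (size p) (size q).
    by have [sq lq] := subr_big q pq; exists q; rewrite // -sq -lq.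
  by have := size_polyD q (- p); rewrite size_polyN sqp (maxn_idPr qp') ltnNge pe.
have pq : (size p < size q)%N by rewrite sq ltnS.
have [sqp lqp] := subr_big q pq; exists q => //; split; rewrite ?sqp ?lqp //.
by apply: contraTneq pq => ->; rewrite ltnn.
Qed.

Lemma weight_diff_family_deg S d : size p = d.+1 ->
  (weight (diff_family P p S) d < weight P d)%N.
Proof.
move=> sp; set L := lead_coefs P d; set lp := lead_coef p.
have lpL : lp \in L by apply/mem_lead_coefsP; exists p.
have uL : uniq L by apply: undup_uniq.
have subr_inj : injective (fun a : int => a - lp) by apply: (can_inj (subrK lp)).
suff -> : weight (diff_family P p S) d = size [seq a - lp | a <- [seq a <- L | a != lp]].
  by rewrite size_map -rem_filter // size_rem // ltn_predL; case: (L) lpL.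
apply/perm_size/uniq_perm; rewrite ?undup_uniq ?(map_inj_uniq subr_inj) ?filter_uniq //.
move=> x; apply/mem_lead_coefs_diffP/mapP => [[q qP [qp sqp <-]]|[a]].
  have sq : size q = d.+1.
    apply/eqP; rewrite eqn_leq -sp pmin // andbT leqNgt; apply/negP => pq.
    by move: sqp; rewrite size_polyDl ?size_polyN // => sqd; rewrite sqd sp ltnn in pq.
  have lqp : lead_coef q != lp by rewrite -(size_subr_eqsize sq sp) sqp.
  exists (lead_coef q); last exact: lead_coef_subr_eqsize sq sp sqp.
  by rewrite mem_filter lqp; apply/mem_lead_coefsP; exists q.
rewrite mem_filter => /andP[alp /mem_lead_coefsP[q qP [sq lq]]] ->.
have sqp : size (q - p) = d.+1 by apply/eqP; rewrite size_subr_eqsize // lq.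
exists q => //; split=> //; last by rewrite (lead_coef_subr_eqsize sq sp sqp) lq.
by apply: contraNneq alp => qp; rewrite -lq qp.
Qed.

End DiffFamily.

Definition mono_config (P : seq {poly int}) r (c : int -> 'I_r) (M S : nat) : Prop :=
  exists (x : int) (n : nat), [/\ (0 < n <= S)%N,
    forall q, q \in P -> `|x + q.[n%:Z]| <= M%:Z &
    {in P &, forall q q', c (x + q.[n%:Z]) = c (x + q'.[n%:Z])}].

Definition pvdw (P : seq {poly int}) : Prop :=
  forall r, exists N, forall c : int -> 'I_r, mono_config P c N N.

Lemma mono_config_weaken P r (c : int -> 'I_r) M S M' S' :
  mono_config P c M S -> (M <= M')%N -> (S <= S')%N -> mono_config P c M' S'.
Proof.
move=> [x [n [/andP[n0 nS] xb xc]]] MM SS; exists x, n; split=> //.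
  by rewrite n0 (leq_trans nS).
by move=> q qP; rewrite (le_trans (xb q qP)) ?lez_nat.
Qed.

Lemma mono_config_shift P r (c : int -> 'I_r) M S (w : int) K :
  `|w| <= K%:Z -> mono_config P (fun t => c (w + t)) M S -> mono_config P c (K + M) S.
Proof.
move=> wK [x [n [nS xb xc]]]; exists (w + x), n; split=> //.
  by move=> q qP; have := xb q qP; rewrite PoszD; lia.
by move=> q q' qP q'P; rewrite -!addrA; apply: xc.
Qed.

Lemma pvdw_const P (p : {poly int}) : {in P, forall q, q = p} -> pvdw P.
Proof.
move=> Pp r; exists 1%N => c; exists (- p.[1]), 1%N; split=> //.
  by move=> q qP; rewrite (Pp q qP) addNr normr0.
by move=> q q' qP q'P; rewrite (Pp q qP) (Pp q' q'P).
Qed.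

(* The colour of [z] under [window_color M c] encodes the colouring [c] on
   [z - M, z + M]. *)
Definition window r M (c : int -> 'I_r) (z : int) : {ffun 'I_M.*2.+1 -> 'I_r} :=
  [ffun i : 'I_M.*2.+1 => c (z + (i%:Z - M%:Z))].

Definition window_color r M (c : int -> 'I_r) (z : int) := enum_rank (window M c z).

Lemma window_color_eq r M (c : int -> 'I_r) z1 z2 :
  window_color M c z1 = window_color M c z2 ->
  forall t, `|t| <= M%:Z -> c (z1 + t) = c (z2 + t).
Proof.
move/enum_rank_inj/ffunP => eq_win t tM.
have := eq_win (inord (absz (t + M%:Z))); rewrite !ffunE inordK; last by lia.
by have -> : (absz (t + M%:Z))%:Z - M%:Z = t by lia.
Qed.

Section Focusing.
Variables (P : seq {poly int}) (p q0 : {poly int}) (r : nat).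
Hypotheses (admP : admissible P) (pP : p \in P) (q0P : q0 \in P) (q0p : q0 != p).

Definition focus_pt (q : {poly int}) (f : int) (s : nat) : int := f - p.[s%:Z] + q.[s%:Z].

(* The configuration with step [s] and base [f - p(s)] consists of the points
   [focus_pt q f s], q in P, its p-point being [f]; [focused] asks that for each
   s in ss the points off p share a colour, these colours being distinct. *)
Definition focused (c : int -> 'I_r) (M S : nat) (f : int) (ss : seq nat) : Prop :=
  [/\ all (fun s => 0 < s <= S)%N ss, `|f| <= M%:Z,
      forall s q, s \in ss -> q \in P -> q != p -> `|focus_pt q f s| <= M%:Z,
      forall s q, s \in ss -> q \in P -> q != p -> c (focus_pt q f s) = c (focus_pt q0 f s) &
      uniq [seq c (focus_pt q0 f s) | s <- ss]].

Definition focusing (u M S : nat) : Prop :=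
  forall c : int -> 'I_r,
    mono_config P c M S \/ exists f ss, size ss = u /\ focused c M S f ss.

Lemma focus_pt0 q f : q \in P -> focus_pt q f 0 = f.
Proof. by move=> qP; rewrite /focus_pt (admP pP).2 (admP qP).2 subr0 addr0. Qed.

Lemma focus_pt_shift q z f s y :
  focus_pt q (z + f) (s + y) = z + (shift_diff (q - p) s%:Z).[y%:Z] + focus_pt q f s.
Proof. by rewrite /focus_pt horner_shift_diff !hornerD !hornerN PoszD [y%:Z + _]addrC; ring. Qed.

Lemma mono_of_focused c M S f ss s : focused c M S f ss -> s \in ss ->
  c f = c (focus_pt q0 f s) -> mono_config P c M S.
Proof.
case=> /allP ssS fM ptM ptc _ sss cf; exists (f - p.[s%:Z]), s; split; first exact: ssS.
  by move=> q qP; have [->|qp] := eqVneq q p; [rewrite subrK | exact: ptM].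
suff col q : q \in P -> c (f - p.[s%:Z] + q.[s%:Z]) = c f.
  by move=> q q' qP q'P; rewrite !col.
move=> qP; have [->|qp] := eqVneq q p; first by rewrite subrK.
by rewrite cf; apply: ptc.
Qed.

Lemma focusing0 : focusing 0 0 0.
Proof. by move=> c; right; exists 0, [::]. Qed.

Lemma focused_extend c M S Z N (z w f : int) (y : nat) ss :
  (0 < y <= N)%N -> `|z| <= Z%:Z ->
  (forall g, g \in diff_family P p S -> `|z + g.[y%:Z]| <= Z%:Z) ->
  (forall g, g \in diff_family P p S -> forall t, `|t| <= M%:Z ->
     c (z + g.[y%:Z] + t) = c (w + t)) ->
  focused (fun t => c (w + t)) M S f ss ->
  c (w + f) \notin [seq c (w + focus_pt q0 f s) | s <- ss] ->
  focused c (Z + M) (S + N) (z + f) [seq s + y | s <- 0%N :: ss].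
Proof.
move=> /andP[y0 yN] zZ gZ gw [/allP ssS fM ptM ptc ss_uniq] fresh.
have ss0S s : s \in 0%N :: ss -> (s <= S)%N.
  by rewrite inE => /predU1P[->//|/ssS/andP[]].
have gQ s q : s \in 0%N :: ss -> q \in P -> q != p ->
    shift_diff (q - p) s%:Z \in diff_family P p S.
  by move=> sss qP qp; apply/mem_diff_familyP; exists q, s; rewrite ss0S.
have ptM0 s q : s \in 0%N :: ss -> q \in P -> q != p -> `|focus_pt q f s| <= M%:Z.
  by move=> + qP; rewrite inE => /predU1P[->|/ptM]; [rewrite focus_pt0 | apply].
have pt_shift s q : s \in 0%N :: ss -> q \in P -> q != p ->
    c (focus_pt q (z + f) (s + y)) = c (w + focus_pt q f s) /\
    `|focus_pt q (z + f) (s + y)| <= (Z + M)%N%:Z.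
  move=> sss qP qp; rewrite focus_pt_shift (gw _ (gQ s q sss qP qp)) ?ptM0 //; split=> //.
  by have := gZ _ (gQ s q sss qP qp); have := ptM0 s q sss qP qp; rewrite PoszD; lia.
split.
- apply/allP => _ /mapP[s sss ->]; rewrite addn_gt0 y0 orbT /=.
  by rewrite leq_add ?ss0S.
- by rewrite PoszD; lia.
- by move=> _ q /mapP[s sss ->] qP qp; case: (pt_shift s q sss qP qp).
- move=> _ q /mapP[s sss ->] qP qp.
  rewrite (pt_shift s q sss qP qp).1 (pt_shift s q0 sss q0P q0p).1.
  by move: sss; rewrite inE => /predU1P[->|/ptc->//]; rewrite !focus_pt0.
have -> : [seq c (focus_pt q0 (z + f) s) | s <- [seq s + y | s <- 0%N :: ss]] =
          [seq c (w + focus_pt q0 f s) | s <- 0%N :: ss].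
  by rewrite -map_comp; apply/eq_in_map => s sss /=; rewrite (pt_shift s q0 sss q0P q0p).1.
by rewrite /= focus_pt0 // fresh.
Qed.

Lemma focusing_step u M S : pvdw (diff_family P p S) -> focusing u M S ->
  exists M' S', focusing u.+1 M' S'.
Proof.
move=> pvdwQ focusMS.
have [N HN] := pvdwQ #|{ffun 'I_M.*2.+1 -> 'I_r}|.
pose B := \max_(i < N.+1) absz (q0 - p).[i%:Z].
exists (N + B + M)%N, (S + N)%N => c.
have [z [y [yN zgN same_win]]] := HN (window_color M c).
have g0Q : shift_diff (q0 - p) 0 \in diff_family P p S.
  by apply/mem_diff_familyP; exists q0, 0%N.
have g0y : (shift_diff (q0 - p) 0).[y%:Z] = (q0 - p).[y%:Z].
  by rewrite horner_shift_diff addr0 (root0_subr admP pP q0P) subr0.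
pose w := z + (q0 - p).[y%:Z].
have wN : `|w| <= N%:Z by rewrite /w -g0y; apply: zgN.
have zNB : `|z| <= (N + B)%N%:Z.
  have yB : (absz (q0 - p).[y%:Z] <= B)%N.
    by case/andP: yN => _ yN; apply: (leq_bigmax_cond (Ordinal (yN : (y < N.+1)%N))).
  by move: wN; rewrite /w PoszD; lia.
have NM : (N + M <= N + B + M)%N by rewrite leq_add2r leq_addr.
have SN : (S <= S + N)%N by rewrite leq_addr.
case: (focusMS (fun t => c (w + t))) => [mono|[f [ss [size_ss foc]]]].
  by left; apply: mono_config_weaken (mono_config_shift wN mono) NM SN.
have [old|fresh] := boolP (c (w + f) \in [seq c (w + focus_pt q0 f s) | s <- ss]).
  left; case/mapP: old => s sss cs.
  exact: mono_config_weaken (mono_config_shift wN (mono_of_focused foc sss cs)) NM SN.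
right; exists (z + f), [seq s + y | s <- 0%N :: ss]; split; first by rewrite size_map /= size_ss.
apply: focused_extend foc fresh => // [g gQ|g gQ t tM].
  by rewrite PoszD (le_trans (zgN g gQ)) // lez_nat leq_addr.
by rewrite /w -g0y; apply: window_color_eq (same_win g _ gQ g0Q) t tM.
Qed.

Lemma focusing_exists u : (forall S, pvdw (diff_family P p S)) -> exists M S, focusing u M S.
Proof.
move=> pvdwQ; elim: u => [|u [M [S focusMS]]]; first by exists 0%N, 0%N; apply: focusing0.
exact: focusing_step.
Qed.

Lemma mono_config_by_focusing : (forall S, pvdw (diff_family P p S)) ->
  exists N, forall c : int -> 'I_r, mono_config P c N N.
Proof.
move=> /(focusing_exists r)[M [S focusMS]]; exists (maxn M S) => c.
have [MM SS] := (leq_maxl M S, leq_maxr M S).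
case: (focusMS c) => [mono|[f [ss [size_ss foc]]]].
  exact: mono_config_weaken mono MM SS.
have /mapP[s sss cs] : c f \in [seq c (focus_pt q0 f s) | s <- ss].
  apply: contraT => fresh.
  have uniq_cols : uniq (c f :: [seq c (focus_pt q0 f s) | s <- ss]).
    by rewrite /= fresh; case: foc.
  have := uniq_leq_size uniq_cols (fun i _ => mem_enum 'I_r i).
  by rewrite /= size_map size_ss size_enum_ord ltnn.
exact: mono_config_weaken (mono_of_focused foc sss cs) MM SS.
Qed.

End Focusing.

Theorem pvdw_admissible D (P : seq {poly int}) :
  admissible P -> (forall q, q \in P -> (size q <= D)%N) -> pvdw P.
Proof.
have wf_weight := wf_inverse_image _ _ _ weight (lex_lt_wf D).
elim/(well_founded_induction wf_weight): P => P IH admP degP.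
case: (eqVneq P [::]) => [->|/(exists_argmin (fun q : {poly int} => size q))[p pP pmin]].
  exact: (@pvdw_const _ 0).
have [allp|/allPn[q0 q0P q0p]] := boolP (all (eq_op^~ p) P).
  by apply: (@pvdw_const _ p) => q /(allP allp)/eqP.
move=> r; apply: (@mono_config_by_focusing P p q0 r admP pP q0P q0p) => S.
apply: IH; [|exact: admissible_diff_family|exact: size_diff_family].
have sp : size p = (size p).-1.+1 by rewrite prednK // size_poly_gt0 (admP p pP).1.
exists (size p).-1; split.
- by rewrite (leq_trans (leq_pred _)) ?degP.
- exact: weight_diff_family_deg.
- by move=> e /andP[pe _]; apply: weight_diff_family_gt; rewrite // sp.
Qed.

Lemma large_sub (D D' : nat -> Prop) : (forall d, D d -> D' d) -> large D -> large D'.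
Proof.
move=> DD' lD r r0 c k k0; have [a [d [a0 Dd cad]]] := lD r r0 c k k0.
by exists a, d; split=> //; apply: DD'.
Qed.

Lemma large_int_poly_values (q : {poly int}) : q.[0] = 0 ->
  (forall n, (0 < n)%N -> 0 < q.[n%:Z]) ->
  large (fun d => exists2 n, (0 < n)%N & q.[n%:Z] = d%:Z).
Proof.
move=> q0 q_gt0 r _ c k k0.
have qn0 : q != 0 by apply: contraTneq (q_gt0 1%N isT) => ->; rewrite horner0.
pose P := [seq i%:Z *: q | i <- iota 1 k].
have iqP i : (i < k)%N -> i.+1%:Z *: q \in P.
  by move=> ik; apply: map_f; rewrite mem_iota; lia.
have admP : admissible P.
  move=> g /mapP[i]; rewrite mem_iota => /andP[i1 _] ->.
  by rewrite scale_poly_eq0 negb_or qn0 andbT hornerZ q0 mulr0 -lt0n.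
have degP g : g \in P -> (size g <= size q)%N by case/mapP => i _ ->; apply: size_scale_leq.
have [N mono] := pvdw_admissible admP degP r.
(* The points involved lie in [-N, N], where this shift into N is injective. *)
have [x [n [/andP[n0 _] xb xc]]] := mono (fun z => c (absz (z + N.+1%:Z))).
have d_gt0 := q_gt0 n n0; set d := q.[n%:Z] in d_gt0.
have xdN i : (i < k)%N -> `|x + i.+1%:Z * d| <= N%:Z.
  by move=> ik; have := xb _ (iqP i ik); rewrite hornerZ.
have := xdN 0%N k0; rewrite mul1r => x1N.
exists (absz (x + d + N.+1%:Z)), (absz d); split.
- by lia.
- by exists n; rewrite // gtz0_abs.
move=> i ik; have := xc _ _ (iqP i ik) (iqP 0%N k0); rewrite !hornerZ mul1r -/d.
suff -> : (absz (x + d + N.+1%:Z)%R + i * absz d)%N = absz (x + i.+1%:Z * d + N.+1%:Z).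
  by [].
by have := xdN i ik; nia.
Qed.

Lemma rat_poly_int_values (p : {poly rat}) (K : nat) : p.[0] = 0 ->
  exists m (q : {poly int}), (K <= m)%N /\
    forall n : nat, p.[(m * n)%:R] = (q.[n%:Z])%:~R.
Proof.
move=> p0; pose m := (\prod_(i < size p) absz (denq p`_i) * K)%N.
have coef_int j : (0 < j)%N -> p`_j * m%:R ^+ j \is a Num.int.
  case: j => // j _; rewrite exprS mulrA rpredM ?rpredX ?rpred_nat //.
  have [jp|pj] := ltnP j.+1 (size p); last by rewrite nth_default // mul0r rpred0.
  rewrite /m (bigD1 (Ordinal jp)) //= !natrM natr_absz gtr0_norm ?denq_gt0 //.
  by rewrite !mulrA -numqE !rpredM ?rpred_int ?rpred_nat.
pose p1 := \poly_(i < size p) (p`_i * m%:R ^+ i).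
have /floorpP[q p1q] : p1 \is a polyOver Num.int.
  apply/polyOverP => j; rewrite coef_poly; case: ltnP => // _.
  case: j => [|j]; last exact: coef_int.
  by rewrite -horner_coef0 p0 mul0r.
exists m, q; split.
  by rewrite leq_pmull // prodn_gt0 // => i; rewrite absz_gt0 denq_neq0.
move=> n; rewrite -horner_map -p1q horner_poly horner_coef natrM.
by apply: eq_bigr => i _; rewrite exprMn mulrA.
Qed.

Theorem mainTheorem6 (p : {poly rat}) :
  0 < lead_coef p -> p.[0] = 0 -> large (pos_values p).
Proof.
move=> lc_gt0 p0; have [x0 p_ge] := poly_pinfty_gt_lc lc_gt0.
have [m [q [Km pq]]] := rat_poly_int_values (Num.bound `|x0|).+1 p0.
have q_gt0 n : (0 < n)%N -> 0 < q.[n%:Z].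
  move=> n0; rewrite -(ltr0z rat) -pq (lt_le_trans lc_gt0) // p_ge //.
  rewrite (le_trans (ler_norm x0)) // ltW // (lt_le_trans (archi_boundP (normr_ge0 x0))) //.
  by rewrite ler_nat (leq_trans (leqnSn _)) // (leq_trans Km) // leq_pmulr.
have q0 : q.[0] = 0 by apply: (@intr_inj rat); have := pq 0%N; rewrite muln0 p0.
apply: large_sub (large_int_poly_values q0 q_gt0) => d [n n0 qnd].
split; first by rewrite -ltz_nat -qnd q_gt0.
exists (m * n)%N; split; last by rewrite pq qnd.
by rewrite muln_gt0 n0 (leq_trans _ Km).
Qed.
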